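(* Let $G$ be a connected graph on $N\ge2$ vertices with minimum vertex degree $D_{\min}\ge1$, and let $\rho$ be $|\psi_G\rangle$ subjected to independent local $Z$-noise with probability $p\in[0,1/2]$ on each qubit. If $$2(1-p)^{D_{\min}+1}\le (1-p)^{D_{\min}}+p^{D_{\min}},$$ then $\rho$ cannot be purified to $|\psi_G\rangle$ by any protocol.
   Context: Graph state $|\psi_G\rangle$: common $+1$ eigenstate of $K_i=X_i\prod_{\{i,j\}\in E_G}Z_j$ (equivalently $|+\rangle^{\otimes N}$ followed by controlled-phase gates along every edge). Local $Z$-noise with probability $p$: $\rho=\sum_{j\in\{0,1\}^N}p^{|j|}(1-p)^{N-|j|}Z_j|\psi_G\rangle\langle\psi_G|Z_j$. Purification: each qubit held by a distinct party holding that qubit from arbitrarily many copies; using SLOCC they must produce $|\psi_G\rangle$ with fidelity arbitrarily close to 1. Known input: a two-qubit Bell-diagonal state with weight $\lambda_{00}$ on the target Bell state is purifiable iff $\lambda_{00}>1/2$. *)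

From HB Require Import structures.
From mathcomp Require Import all_boot all_order all_algebra.
From mathcomp Require Import reals.
From mathcomp Require Import complex.
Set Implicit Arguments. Unset Strict Implicit. Unset Printing Implicit Defensive.
Import Order.TTheory GRing.Theory Num.Theory.
Local Open Scope ring_scope.
Local Open Scope complex_scope.

Definition simple_graph (N : nat) (adj : rel 'I_N) : Prop :=
  symmetric adj /\ irreflexive adj.

Definition connected_graph (N : nat) (adj : rel 'I_N) : Prop :=
  forall i j : 'I_N, connect adj i j.

Definition degree (N : nat) (adj : rel 'I_N) (i : 'I_N) : nat :=
  #|[set j | adj i j]|.

Definition is_min_degree (N : nat) (adj : rel 'I_N) (D : nat) : Prop :=
  (forall i, D <= degree adj i)%N /\ exists i, degree adj i = D.

(* computational basis of N qubits: x : {ffun 'I_N -> bool} (x i = true <-> |1>) *)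
Notation basis N := {ffun 'I_N -> bool}.

Section QState.
Variable R : realType.
Local Notation C := R[i].

Definition sgn (b : bool) : C := if b then -1 else 1.

(* amplitude of the graph state |psi_G> = prod_{edges} CZ |+>^N :
   psi_G(x) = 2^{-N/2} (-1)^{#edges {i,j} with x_i = x_j = 1} *)
Definition graph_amp (N : nat) (adj : rel 'I_N) (x : basis N) : C :=
  ((Num.sqrt (2%:R ^+ N : R))^-1)%:C *
  \prod_(i : 'I_N) \prod_(j : 'I_N | (i < j)%N && adj i j) sgn (x i && x j).

(* the noisy state rho = sum_j p^|j| (1-p)^(N-|j|) Z_j |psi_G><psi_G| Z_j ,
   as a matrix indexed by basis states:  rho(x,y) = <x|rho|y>  *)
Definition noisy_rho (N : nat) (adj : rel 'I_N) (p : R) (x y : basis N) : C :=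
  \sum_(jz : basis N)
    (p ^+ #|[set i | jz i]| * (1 - p) ^+ (N - #|[set i | jz i]|))%:C *
    ((\prod_(i : 'I_N) sgn (jz i && x i)) * graph_amp adj x) *
    ((\prod_(i : 'I_N) sgn (jz i && y i)) * graph_amp adj y)^*.

(* n copies: basis states X : {ffun 'I_n -> basis N}, X k i = qubit i of copy k *)
Definition rho_copies (N n : nat) (adj : rel 'I_N) (p : R)
    (X Y : {ffun 'I_n -> basis N}) : C :=
  \prod_(k : 'I_n) noisy_rho adj p (X k) (Y k).

(* A local (SLOCC) operation of party i: a linear map from the party's n input
   qubits (basis {ffun 'I_n -> bool}) to one output qubit;
   A i b u = <b| A_i |u>.  A successful SLOCC branch acts by the Kraus operator
   K = A_1 (x) ... (x) A_N. *)
Definition kraus (N n : nat) (A : 'I_N -> bool -> {ffun 'I_n -> bool} -> C)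
    (z : basis N) (X : {ffun 'I_n -> basis N}) : C :=
  \prod_(i : 'I_N) A i (z i) [ffun k => X k i].

Definition slocc_out (N n : nat) (adj : rel 'I_N) (p : R)
    (A : 'I_N -> bool -> {ffun 'I_n -> bool} -> C) (z w : basis N) : C :=
  \sum_(X : {ffun 'I_n -> basis N}) \sum_(Y : {ffun 'I_n -> basis N})
    kraus A z X * rho_copies adj p X Y * (kraus A w Y)^*.

Definition out_trace (N n : nat) (adj : rel 'I_N) (p : R)
    (A : 'I_N -> bool -> {ffun 'I_n -> bool} -> C) : C :=
  \sum_(z : basis N) slocc_out adj p A z z.

Definition out_overlap (N n : nat) (adj : rel 'I_N) (p : R)
    (A : 'I_N -> bool -> {ffun 'I_n -> bool} -> C) : C :=
  \sum_(z : basis N) \sum_(w : basis N)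
    (graph_amp adj z)^* * slocc_out adj p A z w * graph_amp adj w.

(* rho is purifiable to |psi_G>: for every eps > 0 there are a number n of copies
   and local operations succeeding with nonzero probability whose normalised
   output has fidelity <psi_G|sigma|psi_G>/tr sigma >= 1 - eps. *)
Definition purifiable (N : nat) (adj : rel 'I_N) (p : R) : Prop :=
  forall eps : R, 0 < eps ->
    exists (n : nat) (A : 'I_N -> bool -> {ffun 'I_n -> bool} -> C),
      out_trace adj p A != 0 /\
      ((1 - eps)%:C * out_trace adj p A <= out_overlap adj p A).

End QState.

From mathcomp Require Import all_boot all_order all_algebra.
From mathcomp Require Import reals complex ring lra.
Set Implicit Arguments. Unset Strict Implicit. Unset Printing Implicit Defensive.
Import Order.TTheory GRing.Theory Num.Theory.
Local Open Scope complex_scope.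
Local Open Scope ring_scope.

(* Fix a vertex [a] of minimum degree [D] and put [q = 1 - 2p]. In the noisy
   state, dephase the qubits other than [a] by Z-strings [s]; pairing [s] with
   [s + N(a)] (on the graph state, Z on the neighbourhood of [a] is the same as
   X on [a]) writes [rho] as a mixture of two-qubit Bell-diagonal blocks across
   the cut between [a] and the rest. Such a block is separable iff its largest
   weight is at most one half, here iff [q w(s) <= w(s + N(a))]; the worst case
   of this is [q (1-p)^D <= p^D], which is the hypothesis. So [rho] is separable
   across the cut. Tensor powers and local operations preserve this, and a
   state separable across a cut crossed by an edge has fidelity at most 1/2
   with the graph state, whose Schmidt decomposition across that cut has two
   equal coefficients. *)

Section Signs.
Variable R : realType.

Lemma sgnJ b : (sgn R b)^* = sgn R b.
Proof. by case: b; rewrite /sgn ?rmorphN1 ?rmorph1. Qed.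

Lemma sgn_sq b : sgn R b * sgn R b = 1.
Proof. by case: b; rewrite /sgn ?mulrNN mulr1. Qed.

End Signs.

Section SeparableBlock.
Variable R : realType.
Local Notation C := R[i].

Definition sep_index := ('I_5 * bool)%type.

Definition sep_left (j : C) (k : sep_index) (b : bool) : C :=
  match val k.1 with
  | 0 => if b then sgn R k.2 else 1
  | 1 | 2 => if b then j * sgn R k.2 else 1
  | _ => (b == k.2)%:R
  end.

Definition sep_right (j : C) (k : sep_index) (b : bool) : C :=
  match val k.1 with
  | 0 => if b then sgn R k.2 else 1
  | 1 => if b then - j * sgn R k.2 else 1
  | 2 => if b then j * sgn R k.2 else 1
  | 3 => (b == k.2)%:R
  | _ => (b == ~~ k.2)%:R
  end.

Definition sep_coef (q r rb M : C) (k : sep_index) : C :=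
  match val k.1 with
  | 0 => q * (r + rb) / 8%:R
  | 1 => q * (M - rb) / 8%:R
  | 2 => q * (M - r) / 8%:R
  | 3 => (r - q * M) / 2%:R
  | _ => (rb - q * M) / 2%:R
  end.

Lemma conj_sep_left j k b : (sep_left j k b)^* = sep_left j^* k b.
Proof.
rewrite /sep_left; case: k => [[[|[|[|n]]] hk] e] /=; case: b;
  by rewrite ?rmorphM /= ?sgnJ ?conjC1 ?conjC_nat.
Qed.

Lemma conj_sep_right j k b : (sep_right j k b)^* = sep_right j^* k b.
Proof.
rewrite /sep_right; case: k => [[[|[|[|[|n]]]] hk] e] /=; case: b;
  by rewrite ?rmorphM ?rmorphN /= ?sgnJ ?conjC1 ?conjC_nat.
Qed.

(* Each summand is a product vector across the cut (qubit, {A, B}); together they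
   realise a two-qubit Bell-diagonal block with weights r (1 +- q) / 2 and
   rb (1 +- q) / 2. The parameter [M] cancels out; it is there to make all the
   coefficients nonnegative (see [sep_coef_ge0]). *)
Lemma sep_block_decomposition (j q r rb M A B A' B' G G' : C) (xa ya : bool) :
  j * j = -1 ->
  \sum_(k : sep_index) sep_coef q r rb M k *
     (sep_left j k xa * (sep_right j k false * A + sep_right j k true * B) * G) *
     (sep_left (- j) k ya * (sep_right (- j) k false * A' + sep_right (- j) k true * B') * G')
  = 2%:R^-1 * (if xa == ya then 1 else q) * G * G' *
      (r * (if xa then B else A) * (if ya then B' else A') +
       rb * (if xa then A else B) * (if ya then A' else B')).
Proof.
move=> jj.
have sum_index (F : sep_index -> C) : \sum_k F k = \sum_(i < 5) \sum_(e : bool) F (i, e).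
  by rewrite pair_bigA; apply: eq_bigr => -[].
rewrite sum_index !big_ord_recr big_ord0 /= !big_bool /=.
rewrite /sep_coef /sep_left /sep_right /sgn /=.
by case: xa; case: ya => /=; field: jj.
Qed.

Lemma sep_coef_ge0 (q r rb : R) k :
  0 <= q <= 1 -> 0 <= r -> 0 <= rb -> q * r <= rb -> q * rb <= r ->
  0 <= sep_coef q%:C r%:C rb%:C (Num.max r rb)%:C k.
Proof.
move=> /andP [q0 q1] r0 rb0 qr qrb; set M := Num.max r rb.
have rM : r <= M by rewrite le_max lexx.
have rbM : rb <= M by rewrite le_max lexx orbT.
have qMr : q * M <= r by rewrite /M; case: (leP r rb) => _; nra.
have qMrb : q * M <= rb by rewrite /M; case: (leP r rb) => _; nra.
rewrite /sep_coef -[8%:R](rmorph_nat (real_complex R)) -[2%:R](rmorph_nat (real_complex R)).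
rewrite -!fmorphV -?rmorphB -?rmorphD -!rmorphM -?rmorphB.
by case: k => [[[|[|[|[|n]]]] hk] e] /=;
  rewrite -?rmorphM ler0c ?mulr_ge0 ?divr_ge0 ?invr_ge0 //; nra.
Qed.

End SeparableBlock.

Section VertexSplit.
Variables (R : realType) (N : nat) (adj : rel 'I_N).
Hypotheses (adj_sym : symmetric adj) (adj_irr : irreflexive adj).
Variable a : 'I_N.
Local Notation C := R[i].

Definition upd (z : basis N) (b : bool) : basis N :=
  [ffun i => if i == a then b else z i].

Lemma upd_a z b : upd z b a = b.
Proof. by rewrite ffunE eqxx. Qed.

Lemma upd_ne z b i : i != a -> upd z b i = z i.
Proof. by rewrite ffunE => /negbTE ->. Qed.

Lemma upd_upd z b c : upd (upd z b) c = upd z c.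
Proof. by apply/ffunP=> i; rewrite !ffunE; case: eqP. Qed.

Lemma upd_id z : upd z (z a) = z.
Proof. by apply/ffunP=> i; rewrite !ffunE; case: eqP => // ->. Qed.

Definition nbr_sign (z : basis N) : C := \prod_i sgn R (adj a i && z i).

Definition a_phase (z : basis N) : C := \prod_(j | adj a j) sgn R (z a && z j).

Lemma nbr_sign_upd z b : nbr_sign (upd z b) = nbr_sign z.
Proof.
apply: eq_bigr => i _; rewrite ffunE; case: eqP => // ->.
by rewrite adj_irr.
Qed.

Lemma conj_nbr_sign z : (nbr_sign z)^* = nbr_sign z.
Proof. by rewrite rmorph_prod; apply: eq_bigr => i _; apply: sgnJ. Qed.

Lemma nbr_sign_sq z : nbr_sign z * nbr_sign z = 1.
Proof. by rewrite -big_split /= big1 // => i _; rewrite sgn_sq. Qed.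

Lemma a_phaseE z : a_phase z = if z a then nbr_sign z else 1.
Proof.
rewrite /a_phase /nbr_sign; case: (z a); last by rewrite big1.
by rewrite big_mkcond; apply: eq_bigr => j _; case: (adj a j).
Qed.

Lemma conj_a_phase z : (a_phase z)^* = a_phase z.
Proof. by rewrite rmorph_prod; apply: eq_bigr => j _; apply: sgnJ. Qed.

Definition amp0 (z : basis N) : C := graph_amp R adj (upd z false).

Lemma amp0_upd z b : amp0 (upd z b) = amp0 z.
Proof. by rewrite /amp0 upd_upd. Qed.

Lemma graph_amp_split z : graph_amp R adj z = amp0 z * a_phase z.
Proof.
rewrite /amp0 /graph_amp -mulrA; congr (_ * _).
set za := z a; set z0 := upd z false.
have edge (i j : 'I_N) : (i < j)%N -> sgn R (z i && z j) =
    sgn R (z0 i && z0 j) * sgn R ((i == a) && za && z j) * sgn R ((j == a) && za && z i).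
  move=> lt_ij; rewrite /z0 /za !ffunE.
  case: (eqVneq i a) => [eia|_]; case: (eqVneq j a) => [eja|_];
    rewrite ?eia ?eja /= /sgn ?andbF ?mul1r ?mulr1 1?andbC //.
  by rewrite eia eja ltnn in lt_ij.
rewrite (eq_bigr (fun i : 'I_N => \prod_(j : 'I_N | (i < j)%N && adj i j)
    (sgn R (z0 i && z0 j) * sgn R ((i == a) && za && z j) * sgn R ((j == a) && za && z i))));
  last by move=> i _; apply: eq_bigr => j /andP [lt_ij _]; apply: edge.
under eq_bigr do rewrite !big_split /=.
rewrite !big_split /= -mulrA; congr (_ * _).
have -> : \prod_(i : 'I_N) \prod_(j : 'I_N | (i < j)%N && adj i j) sgn R ((i == a) && za && z j) =
          \prod_(j : 'I_N | (a < j)%N && adj a j) sgn R (za && z j).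
  rewrite (bigD1 a) //= eqxx [X in _ * X]big1 ?mulr1 // => i /negbTE nia.
  by rewrite big1 // => j _; rewrite nia.
have -> : \prod_(i : 'I_N) \prod_(j : 'I_N | (i < j)%N && adj i j) sgn R ((j == a) && za && z i) =
          \prod_(j : 'I_N | (j < a)%N && adj a j) sgn R (za && z j).
  under eq_bigr do rewrite big_mkcond.
  rewrite exchange_big (bigD1 a) //= [X in _ * X]big1 ?mulr1.
    by rewrite [RHS]big_mkcond; apply: eq_bigr => i _; rewrite eqxx adj_sym.
  by move=> j /negbTE nja; apply: big1 => i _; rewrite nja; case: ifP.
rewrite /a_phase -/za [RHS](bigID (fun j : 'I_N => (a < j)%N)) /=.
congr (_ * _); apply: eq_bigl => j.
  by rewrite andbC.
by case: (ltngtP a j) => [_|_|/val_inj <-]; rewrite ?andbT ?andbF ?adj_irr.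
Qed.

End VertexSplit.

Definition coherence (R : realType) (p : R) : R := 1 - 2 * p.

Section NoiseDecomposition.
Variables (R : realType) (N : nat) (adj : rel 'I_N).
Hypotheses (adj_sym : symmetric adj) (adj_irr : irreflexive adj).
Variables (a : 'I_N) (p : R).
Local Notation C := R[i].
Local Notation q := (coherence p).
Local Notation upd := (upd a).
Local Notation psi := (graph_amp R adj).
Local Notation nbr_sign := (nbr_sign R adj a).
Local Notation a_phase := (a_phase R adj a).
Local Notation amp0 := (amp0 R adj a).

Definition dephasing (x y : basis N) (i : 'I_N) : C := if x i == y i then 1 else q%:C.

Lemma binomial_weight_prod (jz : basis N) :
  p ^+ #|[set i | jz i]| * (1 - p) ^+ (N - #|[set i | jz i]|) =
  \prod_i (if jz i then p else 1 - p).
Proof.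
rewrite (bigID (fun i => jz i)) /= (eq_bigr (fun _ => p)); last by move=> i ->.
rewrite [X in _ = _ * X](eq_bigr (fun _ => 1 - p)); last by move=> i /negbTE ->.
rewrite !prodr_const cardsE; congr (_ * _ ^+ _).
have hc := cardC (fun i => jz i); rewrite card_ord in hc.
by rewrite -[X in (X - _)%N]hc addKn.
Qed.

Lemma noisy_rhoE x y :
  noisy_rho adj p x y = psi x * (psi y)^* * \prod_i dephasing x y i.
Proof.
rewrite /noisy_rho (eq_bigr (fun jz : basis N => psi x * (psi y)^* *
   \prod_i ((if jz i then p else 1 - p)%:C * sgn R (jz i && x i) * sgn R (jz i && y i))));
  last first.
  move=> jz _; rewrite binomial_weight_prod rmorph_prod !big_split /= rmorphM /= rmorph_prod.
  by rewrite (eq_bigr _ (fun i _ => sgnJ R (jz i && y i))); ring.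
rewrite -mulr_sumr; congr (_ * _).
rewrite -(bigA_distr_bigA (fun i b =>
   (if b then p else 1 - p)%:C * sgn R (b && x i) * sgn R (b && y i))) /=.
apply: eq_bigr => i _.
rewrite big_bool /= /dephasing /coherence.
by case: (x i); case: (y i); rewrite /sgn /= -?rmorphN -?rmorphM -rmorphD /=;
  congr (_%:C); ring.
Qed.

(* [chr s] is the character of the Z-string [s] on the qubits other than [a];
   [weight] is the noise on those qubits, and the noise at [a] is kept aside
   as the factor [dephasing x y a]. *)
Definition chr (s z : basis N) : C :=
  \prod_i (if i == a then 1 else sgn R (s i && z i)).

Definition site_weight (i : 'I_N) (b : bool) : R :=
  if i == a then 2^-1 else if b then p else 1 - p.

Definition weight (s : basis N) : R := \prod_i site_weight i (s i).

Definition flip_nbrs (s : basis N) : basis N := [ffun i => s i (+) adj a i].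

Lemma flip_nbrsK : involutive flip_nbrs.
Proof. by move=> s; apply/ffunP => i; rewrite !ffunE -addbA addbb addbF. Qed.

Lemma chr_flip_nbrs s z : chr (flip_nbrs s) z = chr s z * nbr_sign z.
Proof.
rewrite /chr /nbr_sign -big_split /=; apply: eq_bigr => i _; rewrite ffunE.
case: eqP => [->|_]; first by rewrite adj_irr /= mulr1.
by case: (s i); case: (adj a i); case: (z i); rewrite /sgn /= ?mulrNN ?mulr1 ?mul1r.
Qed.

Lemma chr_upd s z b : chr s (upd z b) = chr s z.
Proof. by apply: eq_bigr => i _; rewrite ffunE; case: eqP. Qed.

Lemma conj_chr s z : (chr s z)^* = chr s z.
Proof.
rewrite rmorph_prod /=; apply: eq_bigr => i _.
by case: eqP => _; rewrite ?conjC1 ?sgnJ.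
Qed.

Lemma sum_weight_chr x y :
  \sum_s (weight s)%:C * chr s x * chr s y =
  \prod_i (if i == a then 1 else dephasing x y i).
Proof.
pose F i b := (site_weight i b)%:C * (if i == a then 1 else sgn R (b && x i)) *
               (if i == a then 1 else sgn R (b && y i)).
rewrite (eq_bigr (fun s : basis N => \prod_i F i (s i))); last first.
  by move=> s _; rewrite !big_split /= rmorph_prod.
rewrite -(bigA_distr_bigA F) /=.
apply: eq_bigr => i _; rewrite big_bool /= /F /site_weight /dephasing /coherence.
case: eqP => _.
  by rewrite !mulr1 -rmorphD /= -[RHS](rmorph1 (real_complex R)); congr (_%:C); field.
by case: (x i); case: (y i); rewrite /sgn /= -?rmorphN -?rmorphM -rmorphD /=
  -?(rmorph1 (real_complex R)); congr (_%:C); ring.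
Qed.

Definition sep_weight (k : sep_index) (s : basis N) : C :=
  let w := weight s in let w' := weight (flip_nbrs s) in
  sep_coef q%:C w%:C w'%:C (Num.max w w')%:C k.

Definition split_vec (k : sep_index) (s x : basis N) : C :=
  sep_left 'i k (x a) *
  (sep_right 'i k false * chr s x + sep_right 'i k true * chr (flip_nbrs s) x) * amp0 x.

Lemma conj_split_vec k s y : (split_vec k s y)^* =
  sep_left (- 'i) k (y a) *
  (sep_right (- 'i) k false * chr s y + sep_right (- 'i) k true * chr (flip_nbrs s) y) *
  (amp0 y)^*.
Proof.
rewrite !rmorphM rmorphD /= !rmorphM /=.
by rewrite conj_sep_left !conj_sep_right !conj_chr conjCi.
Qed.

Definition pair_term (s x y : basis N) : C :=
  (weight s)%:C * (chr s x * a_phase x) * (chr s y * a_phase y) *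
  dephasing x y a * amp0 x * (amp0 y)^*.

Lemma sum_split_vec s x y :
  \sum_k sep_weight k s * split_vec k s x * (split_vec k s y)^* =
  2%:R^-1 * (pair_term s x y + pair_term (flip_nbrs s) x y).
Proof.
under eq_bigr do rewrite conj_split_vec /split_vec /sep_weight.
rewrite sep_block_decomposition -?expr2 ?sqr_i //.
rewrite /pair_term !chr_flip_nbrs !a_phaseE /dephasing.
have xx := nbr_sign_sq R adj a x; have yy := nbr_sign_sq R adj a y.
by case: (x a); case: (y a) => /=; ring: xx yy.
Qed.

(* Pairing [s] with [flip_nbrs s] turns the dephased state into a mixture of
   two-qubit blocks across the cut between [a] and the other qubits. *)
Lemma noisy_rho_split x y : noisy_rho adj p x y =
  \sum_s \sum_k sep_weight k s * split_vec k s x * (split_vec k s y)^*.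
Proof.
under [RHS]eq_bigr do rewrite sum_split_vec.
rewrite -mulr_sumr big_split /=.
rewrite [X in _ + X](_ : _ = \sum_s pair_term s x y); last first.
  by rewrite [RHS](reindex_inj (can_inj flip_nbrsK)).
have half_twice (c : C) : 2%:R^-1 * (c + c) = c by field.
rewrite half_twice /pair_term.
rewrite (eq_bigr (fun s => a_phase x * a_phase y * dephasing x y a * amp0 x * (amp0 y)^* *
   ((weight s)%:C * chr s x * chr s y))); last by move=> s _; ring.
rewrite -mulr_sumr sum_weight_chr noisy_rhoE !(graph_amp_split R adj_sym adj_irr a).
rewrite (bigD1 a) //= [in RHS](bigD1 a) //= eqxx mul1r.
rewrite [in RHS](eq_bigr (dephasing x y)); last by move=> i /negbTE ->.
by rewrite rmorphM /= conj_a_phase; ring.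
Qed.

End NoiseDecomposition.

Section NoisePositivity.
Variables (R : realType) (N : nat) (adj : rel 'I_N).
Hypothesis adj_irr : irreflexive adj.
Variables (a : 'I_N) (p : R).
Hypotheses (p_ge0 : 0 <= p) (p_le_half : p <= 2^-1).
Local Notation q := (coherence p).
Local Notation deg := #|[set j | adj a j]|.
Hypothesis deg_bound : q * (1 - p) ^+ deg <= p ^+ deg.
Local Notation weight := (weight a p).
Local Notation flip_nbrs := (flip_nbrs adj a).

Lemma coherence_ge0 : 0 <= q.
Proof. by rewrite /coherence subr_ge0 -ler_pdivlMl // mulr1. Qed.

Lemma coherence_le1 : q <= 1.
Proof. by rewrite /coherence lerBlDr lerDl mulr_ge0. Qed.

Lemma site_weight_ge0 i b : 0 <= site_weight a p i b.
Proof.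
have p_le1 : p <= 1 by apply: le_trans p_le_half _; rewrite invf_le1 ?ler1n.
by rewrite /site_weight; case: eqP; rewrite ?invr_ge0 ?ler0n //; case: b; rewrite ?subr_ge0.
Qed.

Lemma weight_ge0 s : 0 <= weight s.
Proof. by apply: prodr_ge0 => i _; apply: site_weight_ge0. Qed.

(* Flipping the neighbours of [a] changes at most [deg] factors, each between
   [p] and [1 - p]; the degree bound pays for the worst case. *)
Lemma weight_flip_nbrs s : q * weight s <= weight (flip_nbrs s).
Proof.
have p_le_1p : p <= 1 - p by rewrite lerBrDr -mulr2n -mulr_natr -ler_pdivlMr // mul1r.
have nbr_site i b : adj a i -> p <= site_weight a p i b <= 1 - p.
  move=> ai; rewrite /site_weight ifN; last by apply: contraTneq ai => ->; rewrite adj_irr.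
  by case: b; rewrite lexx ?p_le_1p.
rewrite /weight (bigID (adj a)) [X in _ <= X](bigID (adj a)) /=.
rewrite [X in _ <= _ * X](eq_bigr (fun i => site_weight a p i (s i))); last first.
  by move=> i /negbTE nai; rewrite ffunE nai addbF.
rewrite mulrA; apply: ler_wpM2r; first by apply: prodr_ge0 => i _; apply: site_weight_ge0.
apply: (le_trans (y := q * (1 - p) ^+ deg)).
  rewrite ler_wpM2l ?coherence_ge0 // cardsE -prodr_const.
  apply: ler_prod => i ai; have /andP [lo hi] := nbr_site i (s i) ai.
  by rewrite hi (le_trans p_ge0 lo).
apply: (le_trans deg_bound); rewrite cardsE -prodr_const.
apply: ler_prod => i ai; have /andP [lo _] := nbr_site i (flip_nbrs s i) ai.
by rewrite p_ge0 lo.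
Qed.

Lemma sep_weight_ge0 k s : 0 <= sep_weight adj a p k s.
Proof.
apply: sep_coef_ge0; rewrite ?coherence_ge0 ?coherence_le1 ?weight_ge0 ?weight_flip_nbrs //.
by rewrite -[X in _ <= weight X](flip_nbrsK adj a s) weight_flip_nbrs.
Qed.

End NoisePositivity.

Section SplitVectors.
Variables (R : realType) (N : nat) (a : 'I_N).
Local Notation C := R[i].
Local Notation upd := (upd a).

(* [v] factorises as [f (z a) * g (z without a)]: a product vector across the
   cut between qubit [a] and the others. *)
Definition split_at (v : basis N -> C) : Prop :=
  forall x y, v x * v y = v (upd x (y a)) * v (upd y (x a)).

Variable n : nat.
Local Notation config := {ffun 'I_n -> basis N}.

Definition swap_a (X X' : config) : config := [ffun k => upd (X k) (X' k a)].

Lemma swap_aE X X' k : swap_a X X' k = upd (X k) (X' k a).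
Proof. by rewrite ffunE. Qed.

Lemma swap_aK X X' : swap_a (swap_a X X') (swap_a X' X) = X.
Proof. by apply/ffunP => k; rewrite !swap_aE upd_a upd_upd upd_id. Qed.

Definition split_copies (U : config -> C) : Prop :=
  forall X X', U X * U X' = U (swap_a X X') * U (swap_a X' X).

Lemma prod_split_copies (u : 'I_n -> basis N -> C) :
  (forall k, split_at (u k)) -> split_copies (fun X => \prod_k u k (X k)).
Proof.
move=> split_u X X'; rewrite -!big_split; apply: eq_bigr => k _ /=.
by rewrite !swap_aE split_u.
Qed.

Lemma kraus_swap_a (A : 'I_N -> bool -> {ffun 'I_n -> bool} -> C) z z' X X' :
  kraus A z (swap_a X X') * kraus A z' (swap_a X' X) =
  kraus A (upd z (z' a)) X * kraus A (upd z' (z a)) X'.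
Proof.
rewrite /kraus -!big_split; apply: eq_bigr => i _ /=.
have [->|nia] := eqVneq i a.
  rewrite !upd_a mulrC; congr (A _ _ _ * A _ _ _); apply/ffunP => k;
  by rewrite !ffunE eqxx.
rewrite !upd_ne //; congr (A _ _ _ * A _ _ _); apply/ffunP => k;
  by rewrite !ffunE (negbTE nia).
Qed.

(* Local operations act on each party separately, so they preserve the cut. *)
Lemma kraus_split (A : 'I_N -> bool -> {ffun 'I_n -> bool} -> C) (U : config -> C) :
  split_copies U -> split_at (fun z => \sum_X kraus A z X * U X).
Proof.
move=> splitU z z' /=; rewrite big_distrl /=.
under eq_bigr do rewrite big_distrr /=.
rewrite [RHS]big_distrl /=.
under [RHS]eq_bigr do rewrite big_distrr /=.
rewrite !pair_bigA /=.
pose sw (P : config * config) := (swap_a P.1 P.2, swap_a P.2 P.1).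
have swK : involutive sw by move=> [X X']; rewrite /sw /= !swap_aK.
rewrite (reindex_inj (inv_inj swK)); apply: eq_bigr => -[X X'] _ /=.
transitivity (kraus A z (swap_a X X') * kraus A z' (swap_a X' X) *
              (U (swap_a X X') * U (swap_a X' X))); first by ring.
by rewrite kraus_swap_a -splitU; ring.
Qed.

End SplitVectors.

Lemma split_vec_split_at (R : realType) N (adj : rel 'I_N) a k s :
  split_at a (split_vec R adj a k s).
Proof.
by move=> x y; rewrite /split_vec !upd_a !chr_upd !amp0_upd; ring.
Qed.

Definition graph_overlap (R : realType) N (adj : rel 'I_N) (v : basis N -> R[i]) : R[i] :=
  \sum_z (graph_amp R adj z)^* * v z.

Section OutputDecomposition.
Variables (R : realType) (N : nat) (adj : rel 'I_N) (p : R).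
Local Notation C := R[i].
Variables (T : finType) (c : T -> C) (u : T -> basis N -> C).
Hypothesis noisy_rho_decomp :
  forall x y, noisy_rho adj p x y = \sum_t c t * u t x * (u t y)^*.
Variables (n : nat) (A : 'I_N -> bool -> {ffun 'I_n -> bool} -> C).
Local Notation config := {ffun 'I_n -> basis N}.

Definition copy_coef (tau : {ffun 'I_n -> T}) : C := \prod_k c (tau k).

Definition copy_vec (tau : {ffun 'I_n -> T}) (X : config) : C := \prod_k u (tau k) (X k).

Definition out_vec (tau : {ffun 'I_n -> T}) (z : basis N) : C :=
  \sum_X kraus A z X * copy_vec tau X.

Lemma rho_copies_decomp X Y : rho_copies adj p X Y =
  \sum_tau copy_coef tau * copy_vec tau X * (copy_vec tau Y)^*.
Proof.
rewrite /rho_copies; under eq_bigr do rewrite noisy_rho_decomp.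
rewrite bigA_distr_bigA /=; apply: eq_bigr => tau _.
by rewrite /copy_coef /copy_vec rmorph_prod -!big_split.
Qed.

Lemma slocc_out_decomp z w : slocc_out adj p A z w =
  \sum_tau copy_coef tau * out_vec tau z * (out_vec tau w)^*.
Proof.
rewrite /slocc_out.
transitivity (\sum_X \sum_Y \sum_tau
   copy_coef tau * (kraus A z X * copy_vec tau X) * (kraus A w Y * copy_vec tau Y)^*).
  apply: eq_bigr => X _; apply: eq_bigr => Y _.
  rewrite rho_copies_decomp big_distrr big_distrl /=; apply: eq_bigr => tau _.
  by rewrite rmorphM /=; ring.
under eq_bigr do rewrite exchange_big.
rewrite exchange_big; apply: eq_bigr => tau _.
rewrite /out_vec rmorph_sum [RHS]big_distrr /=.
under [RHS]eq_bigr do rewrite big_distrr big_distrl /=.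
by rewrite [RHS]exchange_big; apply: eq_bigr => X _; apply: eq_bigr => Y _; ring.
Qed.

Lemma out_trace_decomp : out_trace adj p A =
  \sum_tau copy_coef tau * \sum_z out_vec tau z * (out_vec tau z)^*.
Proof.
rewrite /out_trace; under eq_bigr do rewrite slocc_out_decomp.
rewrite exchange_big; apply: eq_bigr => tau _; rewrite big_distrr /=.
by apply: eq_bigr => z _; ring.
Qed.

Lemma out_overlap_decomp : out_overlap adj p A =
  \sum_tau copy_coef tau * graph_overlap adj (out_vec tau) * (graph_overlap adj (out_vec tau))^*.
Proof.
rewrite /out_overlap.
transitivity (\sum_z \sum_w \sum_tau copy_coef tau *
   ((graph_amp R adj z)^* * out_vec tau z) * ((graph_amp R adj w)^* * out_vec tau w)^*).
  apply: eq_bigr => z _; apply: eq_bigr => w _.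
  rewrite slocc_out_decomp big_distrr big_distrl /=; apply: eq_bigr => tau _.
  (* generalised, lest [/=] unfold [graph_amp] *)
  move: (graph_amp R adj z) (graph_amp R adj w) => gz gw.
  by rewrite rmorphM /= conjCK; ring.
under eq_bigr do rewrite exchange_big.
rewrite exchange_big; apply: eq_bigr => tau _.
rewrite /graph_overlap rmorph_sum [RHS]big_distrr /=.
under [RHS]eq_bigr do rewrite big_distrr big_distrl /=.
by rewrite [RHS]exchange_big; apply: eq_bigr => z _; apply: eq_bigr => w _; ring.
Qed.

End OutputDecomposition.

Lemma graph_amp_norm (R : realType) N (adj : rel 'I_N) z :
  graph_amp R adj z * (graph_amp R adj z)^* = ((2 ^+ N : R)^-1)%:C.
Proof.
have conj_real (x : R) : (x%:C)^* = x%:C := conjc_real x.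
rewrite /graph_amp rmorphM /= conj_real.
set s := Num.sqrt (2 ^+ N : R); set P := \prod_i _.
have PP : P * P^* = 1.
  rewrite /P rmorph_prod -big_split /= big1 // => i _.
  by rewrite rmorph_prod -big_split /= big1 // => j _; rewrite sgnJ sgn_sq.
transitivity ((s^-1 * s^-1)%:C * (P * P^*)); first by rewrite rmorphM /=; ring.
by rewrite PP mulr1 -invfM -expr2 sqr_sqrtr // exprn_ge0.
Qed.

Lemma bessel2 (C : numClosedFieldType) (I : finType) (e0 e1 g : I -> C) :
  \sum_z e0 z * (e0 z)^* = 1 -> \sum_z e1 z * (e1 z)^* = 1 ->
  \sum_z e0 z * (e1 z)^* = 0 ->
  (\sum_z (e0 z)^* * g z) * (\sum_z (e0 z)^* * g z)^* +
  (\sum_z (e1 z)^* * g z) * (\sum_z (e1 z)^* * g z)^* <= \sum_z g z * (g z)^*.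
Proof.
move=> n0 n1 o01.
set c0 := \sum_z (e0 z)^* * g z; set c1 := \sum_z (e1 z)^* * g z.
have o10 : \sum_z e1 z * (e0 z)^* = 0.
  transitivity ((\sum_z e0 z * (e1 z)^*)^*); last by rewrite o01 conjC0.
  rewrite rmorph_sum /=; apply: eq_bigr => z _.
  by rewrite rmorphM /= conjCK mulrC.
have gc0 : \sum_z g z * (e0 z)^* = c0 by apply: eq_bigr => z _; rewrite mulrC.
have gc1 : \sum_z g z * (e1 z)^* = c1 by apply: eq_bigr => z _; rewrite mulrC.
have cg0 : \sum_z e0 z * (g z)^* = c0^*.
  by rewrite /c0 rmorph_sum /=; apply: eq_bigr => z _; rewrite rmorphM /= conjCK.
have cg1 : \sum_z e1 z * (g z)^* = c1^*.
  by rewrite /c1 rmorph_sum /=; apply: eq_bigr => z _; rewrite rmorphM /= conjCK.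
clearbody c0 c1.
have : 0 <= \sum_z (g z - c0 * e0 z - c1 * e1 z) * (g z - c0 * e0 z - c1 * e1 z)^*.
  by apply: sumr_ge0 => z _; apply: mul_conjC_ge0.
rewrite (eq_bigr (fun z => g z * (g z)^* + (- c0^*) * (g z * (e0 z)^*)
   + (- c1^*) * (g z * (e1 z)^*) + (- c0) * (e0 z * (g z)^*)
   + (c0 * c0^*) * (e0 z * (e0 z)^*) + (c0 * c1^*) * (e0 z * (e1 z)^*)
   + (- c1) * (e1 z * (g z)^*) + (c1 * c0^*) * (e1 z * (e0 z)^*)
   + (c1 * c1^*) * (e1 z * (e1 z)^*))); last first.
  by move=> z _; rewrite !(rmorphD, rmorphN, rmorphM) /=; ring.
rewrite !big_split /= -!big_distrr /= gc0 gc1 cg0 cg1 n0 n1 o01 o10 => res_ge0.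
by rewrite -subr_ge0; move: res_ge0; congr (_ <= _); ring.
Qed.

Lemma cauchy_schwarz2 (C : numClosedFieldType) (f0 f1 c0 c1 : C) :
  (f0 * c0 + f1 * c1) * (f0 * c0 + f1 * c1)^* <=
  (f0 * f0^* + f1 * f1^*) * (c0 * c0^* + c1 * c1^*).
Proof.
set X := f0 * c0 + f1 * c1; rewrite -subr_ge0.
have -> : (f0 * f0^* + f1 * f1^*) * (c0 * c0^* + c1 * c1^*) - X * X^* =
          (f0 * c1^* - f1 * c0^*) * (f0 * c1^* - f1 * c0^*)^*.
  by rewrite /X !(rmorphD, rmorphN, rmorphM) /= !conjCK; ring.
exact: mul_conjC_ge0.
Qed.

Section SplitOverlap.
Variables (R : realType) (N : nat) (adj : rel 'I_N).
Hypotheses (adj_sym : symmetric adj) (adj_irr : irreflexive adj).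
Variables (a b : 'I_N).
Hypothesis adj_ab : adj a b.
Local Notation C := R[i].
Local Notation upd := (upd a).
Local Notation nbr_sign := (nbr_sign R adj a).
Local Notation amp0 := (amp0 R adj a).

Lemma sum_upd_a (F : basis N -> C) :
  \sum_z F z = 2%:R^-1 * \sum_z (F (upd z false) + F (upd z true)).
Proof.
pose flip z := upd z (~~ z a).
have flipK : involutive flip by move=> z; rewrite /flip upd_a upd_upd negbK upd_id.
have -> : \sum_z (F (upd z false) + F (upd z true)) = \sum_z (F z + F (flip z)).
  apply: eq_bigr => z _; rewrite /flip -[in F z](upd_id a z).
  by case: (z a); rewrite // addrC.
rewrite big_split /= [X in _ + X](_ : _ = \sum_z F z); last first.
  by rewrite [RHS](reindex_inj (inv_inj flipK)).
by field.
Qed.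

Lemma split_atP v : split_at a v -> exists (f0 f1 : C) (g : basis N -> C),
  (forall z c, g (upd z c) = g z) /\ (forall z, v z = (if z a then f1 else f0) * g z).
Proof.
move=> split_v; case: (pickP (fun z => v (upd z false) != 0)) => [z0 vz0|v0].
  exists 1, (v (upd z0 true) / v (upd z0 false)), (fun z => v (upd z false)).
  split=> [z c|z]; first by rewrite upd_upd.
  case: (boolP (z a)) => za; last by rewrite mul1r -{1}(upd_id a z) (negbTE za).
  apply: (mulfI vz0); have := split_v (upd z0 false) z; rewrite upd_upd upd_a za => ->.
  by field.
exists 0, 1, (fun z => v (upd z true)).
split=> [z c|z]; first by rewrite upd_upd.
case: (boolP (z a)) => za; first by rewrite mul1r -{1}(upd_id a z) za.
by rewrite mul0r -{1}(upd_id a z) (negbTE za); apply/eqP; rewrite -[_ == 0]negbK v0.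
Qed.

Lemma sum_amp0_norm : \sum_z amp0 z * (amp0 z)^* = 1.
Proof.
under eq_bigr do rewrite graph_amp_norm.
rewrite sumr_const card_ffun card_bool card_ord -(rmorphMn (real_complex R)) /=.
by rewrite -mulr_natr natrX mulVf ?expf_neq0 ?pnatr_eq0.
Qed.

(* Flipping qubit [b] reverses the sign of [nbr_sign]. *)
Lemma sum_nbr_sign : \sum_z nbr_sign z = 0.
Proof.
pose flip (z : basis N) : basis N := [ffun i => if i == b then ~~ z i else z i].
have flipK : involutive flip.
  by move=> z; apply/ffunP => i; rewrite !ffunE; case: eqP => // _; rewrite negbK.
have sign_flip z : nbr_sign (flip z) = - nbr_sign z.
  rewrite /nbr_sign (bigD1 b) //= [in RHS](bigD1 b) //= ffunE eqxx adj_ab /=.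
  rewrite (eq_bigr (fun i => sgn R (adj a i && z i))); last first.
    by move=> i /negbTE nib; rewrite ffunE nib.
  by case: (z b); rewrite /sgn ?mulN1r ?mul1r ?opprK.
have : \sum_z nbr_sign z = - \sum_z nbr_sign z.
  rewrite [LHS](reindex_inj (inv_inj flipK)) -sumrN.
  by apply: eq_bigr => z _; rewrite sign_flip.
by move/eqP; rewrite -addr_eq0 -mulr2n mulrn_eq0 /= => /eqP.
Qed.

Lemma amp0_orthogonal : \sum_z amp0 z * (amp0 z * nbr_sign z)^* = 0.
Proof.
under eq_bigr do rewrite rmorphM /= conj_nbr_sign mulrA graph_amp_norm.
by rewrite -big_distrr /= sum_nbr_sign mulr0.
Qed.

Lemma sum_amp0_sign_norm : \sum_z (amp0 z * nbr_sign z) * (amp0 z * nbr_sign z)^* = 1.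
Proof.
rewrite -[RHS]sum_amp0_norm; apply: eq_bigr => z _.
rewrite rmorphM /= conj_nbr_sign; have := nbr_sign_sq R adj a z.
by move: (nbr_sign z) => P PP; rewrite -mulrA [P * _]mulrC -!mulrA PP mulr1.
Qed.

(* A product vector across the cut at [a] has fidelity at most 1/2 with the
   graph state, which has two equal Schmidt coefficients across that cut. *)
Lemma split_overlap_le_half (v : basis N -> C) : split_at a v ->
  2%:R * (graph_overlap adj v * (graph_overlap adj v)^*) <= \sum_z v z * (v z)^*.
Proof.
move=> /split_atP [f0 [f1 [g [g_upd vE]]]].
set c0 := \sum_z (amp0 z)^* * g z.
set c1 := \sum_z (amp0 z * nbr_sign z)^* * g z.
have overlapE : graph_overlap adj v = 2%:R^-1 * (f0 * c0 + f1 * c1).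
  rewrite /graph_overlap sum_upd_a; congr (_ * _).
  rewrite /c0 /c1 !big_distrr -big_split /=; apply: eq_bigr => z _.
  rewrite !(graph_amp_split R adj_sym adj_irr a) !vE !a_phaseE !upd_a !g_upd.
  by rewrite (nbr_sign_upd _ adj_irr) !amp0_upd mulr1; ring.
have normE : \sum_z v z * (v z)^* =
             2%:R^-1 * ((f0 * f0^* + f1 * f1^*) * \sum_z g z * (g z)^*).
  rewrite sum_upd_a; congr (_ * _); rewrite big_distrr /=.
  by apply: eq_bigr => z _; rewrite !vE !upd_a !g_upd !rmorphM /=; ring.
have bessel := bessel2 g sum_amp0_norm sum_amp0_sign_norm amp0_orthogonal.
rewrite normE overlapE rmorphM /= fmorphV /= conjC_nat.
set X := f0 * c0 + f1 * c1.
rewrite (_ : 2%:R * _ = 2%:R^-1 * (X * X^*)); last by field.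
rewrite ler_wpM2l ?invr_ge0 ?ler0n //; apply: le_trans (cauchy_schwarz2 _ _ _ _) _.
by rewrite ler_wpM2l ?addr_ge0 ?mul_conjC_ge0.
Qed.

End SplitOverlap.

Section SplitMixture.
Variables (R : realType) (N : nat) (adj : rel 'I_N).
Hypotheses (adj_sym : symmetric adj) (adj_irr : irreflexive adj).
Variables (a b : 'I_N) (p : R).
Hypothesis adj_ab : adj a b.
Local Notation C := R[i].
Variables (T : finType) (c : T -> C) (u : T -> basis N -> C).
Hypotheses (c_ge0 : forall t, 0 <= c t) (u_split : forall t, split_at a (u t)).
Hypothesis noisy_rho_decomp :
  forall x y, noisy_rho adj p x y = \sum_t c t * u t x * (u t y)^*.

Lemma out_trace_ge0 n (A : 'I_N -> bool -> {ffun 'I_n -> bool} -> C) :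
  0 <= out_trace adj p A.
Proof.
rewrite (out_trace_decomp noisy_rho_decomp); apply: sumr_ge0 => tau _.
apply: mulr_ge0; first by apply: prodr_ge0.
by apply: sumr_ge0 => z _; apply: mul_conjC_ge0.
Qed.

Lemma out_overlap_le_half n (A : 'I_N -> bool -> {ffun 'I_n -> bool} -> C) :
  2%:R * out_overlap adj p A <= out_trace adj p A.
Proof.
rewrite (out_overlap_decomp noisy_rho_decomp) (out_trace_decomp noisy_rho_decomp).
rewrite mulr_sumr; apply: ler_sum => tau _.
rewrite -mulrA mulrCA ler_wpM2l ?prodr_ge0 //.
apply: (split_overlap_le_half adj_sym adj_irr adj_ab (v := out_vec u A tau)).
exact (kraus_split A (prod_split_copies (fun k => u_split (tau k)))).
Qed.

Lemma split_mixture_not_purifiable : ~ purifiable adj p.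
Proof.
move=> /(_ 4%:R^-1) [|n [A [tr_neq0 fid]]]; first by rewrite invr_gt0 ltr0n.
set tr := out_trace adj p A in tr_neq0 fid.
have := le_trans (ler_wpM2l (ler0n _ 2) fid) (out_overlap_le_half A).
rewrite -subr_ge0 rmorphB rmorph1 fmorphV /= rmorph_nat.
rewrite (_ : tr - _ = - (2%:R^-1 * tr)); last by field.
rewrite oppr_ge0 pmulr_rle0 ?invr_gt0 ?ltr0n // => tr_le0.
by move: tr_neq0; rewrite eq_le tr_le0 out_trace_ge0.
Qed.

End SplitMixture.

Theorem mainTheorem3 (R : realType) (N : nat) (adj : rel 'I_N) (D : nat) (p : R) :
  (2 <= N)%N ->
  simple_graph adj ->
  connected_graph adj ->
  is_min_degree adj D ->
  (1 <= D)%N ->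
  0 <= p -> p <= 1 / 2 ->
  2 * (1 - p) ^+ D.+1 <= (1 - p) ^+ D + p ^+ D ->
  ~ purifiable adj p.
Proof.
move=> _ [adj_sym adj_irr] _ [_ [a deg_a]] D_gt0 p_ge0 p_le_half deg_ineq.
have [b adj_ab] : exists b, adj a b.
  by move: D_gt0; rewrite -deg_a card_gt0 => /set0Pn [b]; rewrite inE; exists b.
have deg_bound : coherence p * (1 - p) ^+ #|[set j | adj a j]| <= p ^+ #|[set j | adj a j]|.
  by move: deg_ineq; rewrite -[#|_|]/(degree adj a) deg_a exprS /coherence; lra.
apply: (split_mixture_not_purifiable adj_sym adj_irr adj_ab
  (c := fun t : basis N * sep_index => sep_weight adj a p t.2 t.1)
  (u := fun t => split_vec R adj a t.2 t.1)).
- by move=> t; apply: (sep_weight_ge0 adj_irr p_ge0 _ deg_bound); rewrite -div1r.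
- by move=> t; apply: split_vec_split_at.
- by move=> x y; rewrite (noisy_rho_split adj_sym adj_irr a) pair_bigA.
Qed.
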